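(* Let $p$ be an odd prime, $\mathcal O$ the ring of integers of a finite extension of $\mathbb Q_p$, and integers $0\le s\le r\le g$. Then (1) $\mathrm{Fil}^{r,s}(V_g(\mathcal O))$ is stable under the action of $S_0(p)$; (2) there is an isomorphism of $S_0(p)$-modules $$\mathrm{Fil}^{r,s}(V_g(\mathcal O))/\mathrm{Fil}^{r,s+1}(V_g(\mathcal O))\cong\big(\mathcal O/p\mathcal O(a^{g-2r+2s})\big)(r-s),$$ and this quotient is generated by the image of the monomial $p^sX^{r-s}Y^{g-r+s}$.
   Context: $V_g(\mathcal O)$: homogeneous degree-$g$ polynomials in $X,Y$ over $\mathcal O$, with right action $(P|\gamma)(X,Y)=P(dX-cY,-bX+aY)$ for $\gamma=\begin{pmatrix}a&b\\c&d\end{pmatrix}$. $S_0(p)=\{\begin{pmatrix}a&b\\c&d\end{pmatrix}\in M_2(\mathbb Z):ad-bc\ne0,\ p\mid c,\ p\nmid a\}$. $\mathrm{Fil}^r=\mathrm{Fil}^r(V_g(\mathcal O))=\{\sum_{j=0}^gb_jX^jY^{g-j}:p^{r-j}\mid b_j\text{ for }0\le j\le r-1\}$, and for $0\le s\le r+1$, $\mathrm{Fil}^{r,s}=\{\sum b_jX^jY^{g-j}\in\mathrm{Fil}^r:p^{r-j+1}\mid b_j\text{ for }r+1-s\le j\le r\}$ (so $\mathrm{Fil}^{r,0}=\mathrm{Fil}^r$ and $\mathrm{Fil}^{r,r+1}=\mathrm{Fil}^{r+1}$). $\big(\mathcal O/p\mathcal O(a^j)\big)(m)$ denotes $\mathcal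 O/p\mathcal O$ on which $\gamma=\begin{pmatrix}a&b\\c&d\end{pmatrix}\in S_0(p)$ acts by multiplication by $\det(\gamma)^m a^j$. *)

From HB Require Import structures.
From mathcomp Require Import all_boot all_order all_algebra.
From mathcomp.multinomials Require Import mpoly.
Set Implicit Arguments. Unset Strict Implicit. Unset Printing Implicit Defensive.
Import Order.TTheory GRing.Theory Num.Theory.
Local Open Scope ring_scope.

(* Q_p and its finite extensions are not available in the libraries; we    *)
(* characterize "O is the ring of integers of a finite extension of Q_p"   *)
(* by the standard intrinsic description: O is a complete discrete         *)
(* valuation ring of characteristic 0, with finite residue field, whose    *)
Definition pdiv_O {O : comNzRingType} (x y : O) : Prop := exists z, y = x * z.

Definition is_ring_of_integers_padic (p : nat) (O : idomainType) : Prop :=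
  exists pi : O,
    (* pi is a uniformizer: non-zero non-unit, and every non-zero element
       is a unit times a power of pi (so O is a DVR) *)
    [/\ pi != 0 /\ pi \isn't a GRing.unit,
        (forall x : O, x != 0 ->
           exists (n : nat) (u : O), u \is a GRing.unit /\ x = u * pi ^+ n),
        (forall n : nat, (0 < n)%N -> n%:R != 0 :> O) /\
        (* residue characteristic p *)
        pdiv_O pi (p%:R),
        (* finite residue field *)
        (exists s : seq O, forall x : O, exists2 y, y \in s & pdiv_O pi (x - y))
      & (* completeness for the pi-adic topology *)
        (forall u : nat -> O,
           (forall k : nat, exists N : nat, forall m n : nat, (N <= m)%N -> (N <= n)%N ->
               pdiv_O (pi ^+ k) (u m - u n)) ->
           exists l : O, forall k : nat, exists N : nat, forall n : nat, (N <= n)%N ->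
               pdiv_O (pi ^+ k) (u n - l))].

(* V_g(O): homogeneous polynomials of degree g in X = 'X_0, Y = 'X_1.      *)
Definition mXY (j k : nat) : 'X_{1..2} := [multinom [tuple j; k]].

Definition monXY (O : comNzRingType) (j k : nat) : {mpoly O[2]} := 'X_[mXY j k].

Definition coefXY (O : comNzRingType) (g j : nat) (P : {mpoly O[2]}) : O :=
  P@_(mXY j (g - j)).

Definition inV (O : comNzRingType) (g : nat) (P : {mpoly O[2]}) : Prop :=
  P \is g.-homog.

Definition pdivs (O : comNzRingType) (p : nat) (k : nat) (x : O) : Prop :=
  pdiv_O ((p%:R : O) ^+ k) x.

Definition Fil (O : comNzRingType) (p g r : nat) (P : {mpoly O[2]}) : Prop :=
  inV g P /\ forall j : nat, (j < r)%N -> pdivs p (r - j) (coefXY g j P).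

Definition Filrs (O : comNzRingType) (p g r s : nat) (P : {mpoly O[2]}) : Prop :=
  Fil p g r P /\
  forall j : nat, (r.+1 - s <= j)%N -> (j <= r)%N -> pdivs p (r - j).+1 (coefXY g j P).

Definition S0 (p : nat) (gam : 'M[int]_2) : Prop :=
  let a : int := gam 0 0 in let c : int := gam 1 0 in
  [/\ \det gam != 0, (p%:Z %| c)%Z & ~~ (p%:Z %| a)%Z].

Definition act (O : comNzRingType) (gam : 'M[int]_2) (P : {mpoly O[2]}) : {mpoly O[2]} :=
  let a : O := (gam 0 0)%:~R in let b : O := (gam 0 1)%:~R in
  let c : O := (gam 1 0)%:~R in let d : O := (gam 1 1)%:~R in
  P \mPo [tuple d *: 'X_0 - c *: 'X_1 ; - (b *: 'X_0) + a *: 'X_1].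

(* The character gam |-> det(gam)^m a^j of S_0(p) on O/pO, with j : int.
   Its value is computed in F_p (a is invertible mod p since p does not
   divide a); the representative in {0,..,p-1} is then cast into O, which
   is a well-defined element of O/pO. *)
Definition chi_val (p : nat) (m : nat) (j : int) (gam : 'M[int]_2) : nat :=
  nat_of_ord (((\det gam)%:~R : 'F_p) ^+ m * ((gam 0 0)%:~R : 'F_p) ^ j).

Definition congp (O : comNzRingType) (p : nat) (x y : O) : Prop := pdivs p 1 (x - y).

From HB Require Import structures.
From mathcomp Require Import all_boot all_order all_algebra.
From mathcomp.multinomials Require Import mpoly.
From mathcomp Require Import zify ring.
From Stdlib Require Import ClassicalEpsilon.
Import Order.TTheory GRing.Theory Num.Theory.
Set Implicit Arguments. Unset Strict Implicit. Unset Printing Implicit Defensive.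
Local Open Scope ring_scope.

(* Fil^{r,s} consists of the homogeneous [P] whose coefficient of [X^j Y^(g-j)]
   is divisible by [p^(filw r s j)], where the weight [filw r s] is non-increasing
   in [j] and drops by at most one at each step.  An element [gam] of S_0(p) sends
   [X^j Y^k] to [(dX - cY)^j (-bX + aY)^k]; as [p | c], every unit by which a term
   lowers the degree in [X] comes with a factor [p], which pays for the weight.
   The graded piece is read off the coefficient of [X^(r-s) Y^(g-r+s)] divided by
   [p^s].  Modulo Fil^{r,s+1} only the diagonal coefficient [d^(r-s) a^(g-r+s)] of
   the image of that monomial matters, and since [det = a d] modulo [p] this is
   the character [det^(r-s) a^(g-2r+2s)]. *)

Section PowerDivisibility.
Variables (R : comNzRingType) (p : nat).
Implicit Types (x y : R) (k : nat).

Lemma pdivs0 k : pdivs p k (0 : R).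
Proof. by exists 0; rewrite mulr0. Qed.

Lemma pdivs_exp0 x : pdivs p 0 x.
Proof. by exists x; rewrite expr0 mul1r. Qed.

Lemma pdivs_expr k : pdivs p k ((p%:R : R) ^+ k).
Proof. by exists 1; rewrite mulr1. Qed.

Lemma pdivsD k x y : pdivs p k x -> pdivs p k y -> pdivs p k (x + y).
Proof. by move=> [a ->] [b ->]; exists (a + b); rewrite mulrDr. Qed.

Lemma pdivsN k x : pdivs p k x -> pdivs p k (- x).
Proof. by move=> [a ->]; exists (- a); rewrite mulrN. Qed.

Lemma pdivsMl k x y : pdivs p k y -> pdivs p k (x * y).
Proof. by move=> [a ->]; exists (x * a); rewrite mulrCA. Qed.

Lemma pdivsMr k x y : pdivs p k x -> pdivs p k (x * y).
Proof. by rewrite mulrC; apply: pdivsMl. Qed.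

Lemma pdivsM k1 k2 x y : pdivs p k1 x -> pdivs p k2 y -> pdivs p (k1 + k2) (x * y).
Proof. by move=> [a ->] [b ->]; exists (a * b); rewrite exprD mulrACA. Qed.

Lemma pdivsW k1 k2 x : (k1 <= k2)%N -> pdivs p k2 x -> pdivs p k1 x.
Proof.
by move=> le [a ->]; exists ((p%:R) ^+ (k2 - k1) * a); rewrite mulrA -exprD subnKC.
Qed.

Lemma pdivs_sum k (I : Type) (r : seq I) (P : pred I) (F : I -> R) :
  (forall i, P i -> pdivs p k (F i)) -> pdivs p k (\sum_(i <- r | P i) F i).
Proof.
by move=> h; apply: (big_ind (pdivs p k)) => //; [apply: pdivs0 | apply: pdivsD].
Qed.

Lemma pdivs_intr (c : int) : (p%:Z %| c)%Z -> pdivs p 1 (c%:~R : R).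
Proof.
by case/dvdzP=> q ->; exists q%:~R; rewrite expr1 intrM mulrC -pmulrn.
Qed.

Lemma congpxx x : congp p x x.
Proof. by rewrite /congp subrr; apply: pdivs0. Qed.

Lemma congp_sym x y : congp p x y -> congp p y x.
Proof. by move=> hxy; rewrite /congp -opprB; apply: pdivsN. Qed.

Lemma congp_trans y x z : congp p x y -> congp p y z -> congp p x z.
Proof. by move=> hxy hyz; rewrite /congp -(subrKA y); apply: pdivsD. Qed.

Lemma congpMl z x y : congp p x y -> congp p (z * x) (z * y).
Proof. by rewrite /congp -mulrBr; apply: pdivsMl. Qed.

End PowerDivisibility.

Section CoefDivisibility.
Variables (R : comNzRingType) (p n : nat) (i : 'I_n).
Implicit Types (w : nat -> nat) (P Q : {mpoly R[n]}).

Definition coef_pdivs w P := forall m : 'X_{1..n}, pdivs p (w (m i)) P@_m.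

Lemma coef_pdivs0 w : coef_pdivs w 0.
Proof. by move=> m; rewrite mcoeff0; apply: pdivs0. Qed.

Lemma coef_pdivs_w0 P : coef_pdivs (fun=> 0%N) P.
Proof. by move=> m; apply: pdivs_exp0. Qed.

Lemma coef_pdivsW w w' P :
  (forall k, w' k <= w k)%N -> coef_pdivs w P -> coef_pdivs w' P.
Proof. by move=> le hP m; apply: pdivsW (hP m). Qed.

Lemma coef_pdivsD w P Q : coef_pdivs w P -> coef_pdivs w Q -> coef_pdivs w (P + Q).
Proof. by move=> hP hQ m; rewrite mcoeffD; apply: pdivsD. Qed.

Lemma coef_pdivsN w P : coef_pdivs w P -> coef_pdivs w (- P).
Proof. by move=> hP m; rewrite mcoeffN; apply: pdivsN. Qed.

Lemma coef_pdivsB w P Q : coef_pdivs w P -> coef_pdivs w Q -> coef_pdivs w (P - Q).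
Proof. by move=> hP hQ; apply/coef_pdivsD/coef_pdivsN. Qed.

Lemma coef_pdivsZ w c P : coef_pdivs w P -> coef_pdivs w (c *: P).
Proof. by move=> hP m; rewrite mcoeffZ; apply: pdivsMl. Qed.

Lemma coef_pdivsZp w v c P :
  pdivs p v c -> coef_pdivs w P -> coef_pdivs (fun k => v + w k)%N (c *: P).
Proof. by move=> hc hP m; rewrite mcoeffZ; apply: pdivsM. Qed.

Lemma coef_pdivs_sum w (I : Type) (r : seq I) (B : pred I) (F : I -> {mpoly R[n]}) :
  (forall j, B j -> coef_pdivs w (F j)) -> coef_pdivs w (\sum_(j <- r | B j) F j).
Proof.
by move=> h; apply: (big_ind (coef_pdivs w)) => //;
  [apply: coef_pdivs0 | apply: coef_pdivsD].
Qed.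

Lemma coef_pdivsM w w1 w2 P Q :
  (forall k1 k2, w (k1 + k2) <= w1 k1 + w2 k2)%N ->
  coef_pdivs w1 P -> coef_pdivs w2 Q -> coef_pdivs w (P * Q).
Proof.
move=> le hP hQ m; rewrite mcoeffM; apply: pdivs_sum => -[m1 m2] /eqP /= E.
have -> : m i = (m1 i + m2 i)%N by rewrite -mnmDE; apply: (congr1 (fun x : 'X_{1..n} => x i)).
exact: pdivsW (le _ _) (pdivsM _ _).
Qed.

Lemma coef_pdivs_exprB w P Q e :
  (forall k1 k2, w (k1 + k2) <= w k1)%N -> (forall k1 k2, w (k1 + k2) <= w k2)%N ->
  coef_pdivs w (P - Q) -> coef_pdivs w (P ^+ e - Q ^+ e).
Proof.
move=> le1 le2 hPQ; elim: e => [|e IH]; first by rewrite !expr0 subrr; apply: coef_pdivs0.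
have -> : P ^+ e.+1 - Q ^+ e.+1 = (P ^+ e - Q ^+ e) * P + Q ^+ e * (P - Q).
  by rewrite !exprSr mulrBl mulrBr addrA subrK.
apply: coef_pdivsD.
  by apply: coef_pdivsM IH (coef_pdivs_w0 _) => k1 k2; rewrite addn0.
exact: coef_pdivsM (coef_pdivs_w0 _) hPQ.
Qed.

Lemma coef_pdivs_scaleX x : coef_pdivs (fun k => 1 - k)%N (x *: 'X_i).
Proof.
move=> m; rewrite mcoeffZ mcoeffX; case: eqP => [<-|_].
  by rewrite mnm1E eqxx subnn; apply: pdivs_exp0.
by rewrite mulr0; apply: pdivs0.
Qed.

Lemma coef_pdivs_scaleX_pdivs (j : 'I_n) c :
  pdivs p 1 c -> coef_pdivs (fun=> 1%N) (c *: 'X_j).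
Proof. by move=> hc m; rewrite mcoeffZ; apply: pdivsMr. Qed.

Lemma coef_pdivs_linear_form d c (j : 'I_n) :
  pdivs p 1 c -> coef_pdivs (fun k => 1 - k)%N (d *: 'X_i - c *: 'X_j).
Proof.
move=> hc; apply: coef_pdivsB; first exact: coef_pdivs_scaleX.
apply: coef_pdivsW (coef_pdivs_scaleX_pdivs j hc) => k.
by rewrite leq_subr.
Qed.

Lemma coef_pdivs_expr L e :
  coef_pdivs (fun k => 1 - k)%N L -> coef_pdivs (fun k => e - k)%N (L ^+ e).
Proof.
move=> hL; elim: e => [|e IH].
  by rewrite expr0; apply: coef_pdivsW (coef_pdivs_w0 _) => k; rewrite sub0n.
by rewrite exprS; apply: coef_pdivsM hL IH => k1 k2; lia.
Qed.

End CoefDivisibility.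

Lemma mXY0 j k : mXY j k ord0 = j. Proof. by []. Qed.
Lemma mXY1 j k : mXY j k ord_max = k. Proof. by []. Qed.

Lemma mXY_eta (m : 'X_{1..2}) : m = mXY (m ord0) (m ord_max).
Proof.
apply/mnmP => -[[|[|i]] Hi] //=.
- by rewrite (_ : Ordinal Hi = ord0) //; apply: val_inj.
- by rewrite (_ : Ordinal Hi = ord_max) //; apply: val_inj.
Qed.

Lemma mdeg2 (m : 'X_{1..2}) : mdeg m = (m ord0 + m ord_max)%N.
Proof.
rewrite mdegE big_ord_recl big_ord_recl big_ord0 addn0.
by congr (_ + m _)%N; apply: val_inj.
Qed.

Lemma mXYE j k : mXY j k = (U_(ord0 : 'I_2) *+ j + U_(ord_max : 'I_2) *+ k)%MM.
Proof.
apply/mnmP => i; rewrite mnmDE !mulmnE !mnm1E.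
by case: i => -[|[|i]] Hi //=; rewrite /eq_op /= mul1n mul0n ?addn0.
Qed.

Lemma mXY_addX j k : mXY j k = (U_(ord0 : 'I_2) *+ j + mXY 0 k)%MM.
Proof.
apply/mnmP => i; rewrite mnmDE !mulmnE !mnm1E.
by case: i => -[|[|i]] Hi //=; rewrite /eq_op /= ?mul1n ?mul0n ?addn0.
Qed.

Lemma mcoeff_dhomog_mXY (R : comNzRingType) g (P : {mpoly R[2]}) (m : 'X_{1..2}) :
  P \is g.-homog -> P@_m != 0 -> m = mXY (m ord0) (g - m ord0).
Proof.
move=> /dhomogP hom nz; have : mdeg m = g by apply: hom; rewrite mcoeff_msupp.
by rewrite mdeg2 => <-; rewrite addKn [LHS]mXY_eta.
Qed.

Definition filw (r s j : nat) : nat :=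
  (if j <= r then (if r.+1 - s <= j then (r - j).+1 else r - j) else 0)%N.

Lemma leq_filw r s j k : (filw r s k <= filw r s j + (j - k))%N.
Proof.
rewrite /filw; case: (leqP k r) => hk; case: (leqP j r) => hj;
  try case: (leqP (r.+1 - s) k) => h1; try case: (leqP (r.+1 - s) j) => h2; lia.
Qed.

Lemma filwS r s j : (s <= r)%N -> j != (r - s)%N -> filw r s.+1 j = filw r s j.
Proof.
move=> sr /eqP ne; rewrite /filw; case: (leqP j r); case: (leqP (r.+1 - s.+1) j);
  case: (leqP (r.+1 - s) j); lia.
Qed.

Lemma FilrsE (R : comNzRingType) p g r s (P : {mpoly R[2]}) :
  Filrs p g r s P <-> P \is g.-homog /\ coef_pdivs p ord0 (filw r s) P.
Proof.
split=> [[[hom h1] h2]|[hom hP]].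
  split=> // m; have [->|nz] := eqVneq P@_m 0; first exact: pdivs0.
  rewrite (mcoeff_dhomog_mXY hom nz) -/(coefXY g _ P) /filw.
  case: (leqP (m ord0) r) => hj; last exact: pdivs_exp0.
  case: (leqP (r.+1 - s) (m ord0)) => hs; first exact: h2.
  have [jr|rj] := ltnP (m ord0) r; first exact: h1.
  by rewrite (_ : r - m ord0 = 0)%N; [apply: pdivs_exp0 | lia].
split; first split=> // j hj.
  apply: pdivsW (hP (mXY j (g - j))).
  by rewrite mXY0 /filw; case: (leqP j r); case: (leqP (r.+1 - s) j); lia.
move=> j h1 h2; apply: pdivsW (hP (mXY j (g - j))).
by rewrite mXY0 /filw; case: (leqP j r); case: (leqP (r.+1 - s) j); lia.
Qed.

Lemma Filrs_coef_pdivsS (R : comNzRingType) p g r s (P : {mpoly R[2]}) :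
  (s <= r)%N -> Filrs p g r s P -> pdivs p s.+1 (coefXY g (r - s) P) ->
  Filrs p g r s.+1 P.
Proof.
move=> sr /FilrsE [hom hP] hc; apply/FilrsE; split=> // m.
have [->|nz] := eqVneq P@_m 0; first exact: pdivs0.
have [e|ne] := eqVneq (m ord0) (r - s)%N.
  have -> : filw r s.+1 (m ord0) = s.+1.
    by rewrite e /filw; case: (leqP (r - s) r); case: (leqP (r.+1 - s.+1) (r - s)); lia.
  by rewrite (mcoeff_dhomog_mXY hom nz) e.
by rewrite filwS //; apply: hP.
Qed.

Lemma FilrsB (R : comNzRingType) p g r s (P Q : {mpoly R[2]}) :
  Filrs p g r s P -> Filrs p g r s Q -> Filrs p g r s (P - Q).
Proof.
move=> /FilrsE [homP hP] /FilrsE [homQ hQ]; apply/FilrsE.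
by split; [rewrite rpredB | apply: coef_pdivsB].
Qed.

Lemma FilrsZ (R : comNzRingType) p g r s x (P : {mpoly R[2]}) :
  Filrs p g r s P -> Filrs p g r s (x *: P).
Proof.
by move=> /FilrsE [homP hP]; apply/FilrsE; split; [apply: dhomogZ | apply: coef_pdivsZ].
Qed.

Section Action.
Variables (R : comNzRingType) (gam : 'M[int]_2).
Implicit Types (P Q : {mpoly R[2]}).
Local Notation a := ((gam 0 0)%:~R : R).
Local Notation b := ((gam 0 1)%:~R : R).
Local Notation c := ((gam 1 0)%:~R : R).
Local Notation d := ((gam 1 1)%:~R : R).

Lemma actB P Q : act gam (P - Q) = act gam P - act gam Q.
Proof. exact: raddfB. Qed.

Lemma actZ x P : act gam (x *: P) = x *: act gam P.
Proof. exact: comp_mpolyZ. Qed.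

Lemma act_X (m : 'X_{1..2}) :
  act gam 'X_[m] =
    (d *: 'X_0 - c *: 'X_1) ^+ m ord0 * (- (b *: 'X_0) + a *: 'X_1) ^+ m ord_max.
Proof.
rewrite /act comp_mpolyX !big_ord_recl big_ord0 mulr1.
by congr (_ * _ ^+ m _); apply: val_inj.
Qed.

Lemma act_expand P : act gam P = \sum_(m <- msupp P) P@_m *: act gam 'X_[m].
Proof. by rewrite /act comp_mpolyEX; apply: eq_bigr => m _; rewrite comp_mpolyX. Qed.

Lemma dhomog_linear_form (x y : R) (i j : 'I_2) : x *: 'X_i + y *: 'X_j \is 1.-homog.
Proof. by apply: dhomogD; apply: dhomogZ; rewrite dhomogX; apply/eqP/mdeg1. Qed.

Lemma act_dhomog g P : P \is g.-homog -> act gam P \is g.-homog.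
Proof.
move=> /dhomogP hom; rewrite act_expand big_seq.
apply: (big_ind (fun Q : {mpoly R[2]} => Q \is g.-homog)) => [||m /hom hm].
- exact: dhomog0.
- exact: dhomogD.
have <- : (m ord0 + m ord_max)%N = g by rewrite -mdeg2.
apply: dhomogZ; rewrite act_X.
rewrite -[in X in X.-homog](mul1n (m ord0)) -[in X in X.-homog](mul1n (m ord_max)).
apply: dhomogM; apply: dhomogMn.
  by rewrite -scaleNr dhomog_linear_form.
by rewrite -scaleNr dhomog_linear_form.
Qed.

Variable p : nat.
Hypothesis p_dvd_c : (p%:Z %| gam 1%R 0%R)%Z.

Lemma act_coef_pdivs r s P :
  coef_pdivs p ord0 (filw r s) P -> coef_pdivs p ord0 (filw r s) (act gam P).
Proof.
move=> hP; rewrite act_expand; apply: coef_pdivs_sum => m _; rewrite act_X.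
apply: coef_pdivsW (leq_filw r s (m ord0)) _.
apply: coef_pdivsZp (hP m) _.
apply: (coef_pdivsM (w1 := fun k => (m ord0 - k)%N) (w2 := fun=> 0%N)) => [k1 k2||].
- by rewrite addn0 leq_sub2l ?leq_addr.
- by apply/coef_pdivs_expr/coef_pdivs_linear_form/pdivs_intr.
- exact: coef_pdivs_w0.
Qed.

Lemma Filrs_act g r s P : Filrs p g r s P -> Filrs p g r s (act gam P).
Proof.
by move=> /FilrsE [hom hP]; apply/FilrsE; split; [apply: act_dhomog | apply: act_coef_pdivs].
Qed.

Lemma act_monXY_coef j k :
  congp p (act gam (monXY R j k))@_(mXY j k) (d ^+ j * a ^+ k).
Proof.
rewrite /monXY act_X mXY0 mXY1.
set L1 : {mpoly R[2]} := d *: 'X_0 - c *: 'X_1; set A1 : {mpoly R[2]} := d *: 'X_0.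
set L2 : {mpoly R[2]} := - (b *: 'X_0) + a *: 'X_1; set A2 : {mpoly R[2]} := a *: 'X_1.
have E1 : coef_pdivs p ord0 (fun=> 1%N) (L1 ^+ j - A1 ^+ j).
  apply: coef_pdivs_exprB => //; rewrite addrAC subrr add0r.
  exact/coef_pdivsN/coef_pdivs_scaleX_pdivs/pdivs_intr.
have E2 : coef_pdivs p ord0 (fun k => 1 - k)%N (L2 ^+ k - A2 ^+ k).
  apply: coef_pdivs_exprB => [k1 k2|k1 k2|]; [lia | lia |].
  by rewrite addrK; apply/coef_pdivsN/coef_pdivs_scaleX.
have -> : L1 ^+ j * L2 ^+ k =
    A1 ^+ j * A2 ^+ k + A1 ^+ j * (L2 ^+ k - A2 ^+ k) + (L1 ^+ j - A1 ^+ j) * L2 ^+ k.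
  by ring.
have -> : A1 ^+ j * A2 ^+ k = (d ^+ j * a ^+ k) *: 'X_[mXY j k].
  by rewrite !exprZn -scalerAl -scalerAr scalerA !mpolyXn -mpolyXD -mXYE.
rewrite /congp !mcoeffD mcoeffZ mcoeffX eqxx mulr1 addrAC [X in X + _]addrAC subrr add0r.
apply: pdivsD.
  rewrite exprZn -scalerAl mcoeffZ [_ * (_ - _)]mulrC mpolyXn mXY_addX mcoeffMX.
  apply: pdivsMl.
  exact: E2 (mXY 0 k).
have hP := coef_pdivs_w0 p ord0 (L2 ^+ k).
exact: (coef_pdivsM (w := fun=> 1%N) (w1 := fun=> 1%N) (w2 := fun=> 0%N)
  (fun _ _ => leqnn 1) E1 hP (mXY j k)).
Qed.

End Action.

Lemma det_mx2 (R : comNzRingType) (M : 'M[R]_2) :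
  \det M = M 0 0 * M 1 1 - M 0 1 * M 1 0.
Proof.
rewrite (expand_det_row _ 0) !big_ord_recl big_ord0 addr0 /cofactor !det_mx11 /=.
rewrite !mxE /= expr0 expr1 mul1r mulN1r mulrN.
by congr (M _ _ * M _ _ - M _ _ * M _ _); apply: val_inj.
Qed.

Lemma Fp_intr_eq0 p (z : int) : prime p -> (z%:~R : 'F_p) = 0 -> (p%:Z %| z)%Z.
Proof.
move=> pp; rewrite dvdzE; case: z => n /=.
  by move=> /eqP; rewrite -(dvdn_pcharf (pchar_Fp pp)).
by rewrite NegzE mulrNz => /eqP; rewrite oppr_eq0 -(dvdn_pcharf (pchar_Fp pp)).
Qed.

Lemma chi_val_congp (R : comNzRingType) p (gam : 'M[int]_2) m n :
  prime p -> S0 p gam ->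
  congp p (chi_val p m (n%:Z - m%:Z) gam)%:R ((gam 1 1)%:~R ^+ m * (gam 0 0)%:~R ^+ n : R).
Proof.
move=> pp [_ hc ha].
have cF : ((gam 1 0)%:~R : 'F_p) = 0.
  by case/dvdzP: hc => q ->; rewrite intrM -pmulrn pchar_Fp_0 // mulr0.
have aF : ((gam 0 0)%:~R : 'F_p) != 0 by apply: contra ha => /eqP /(Fp_intr_eq0 pp).
set N : int := gam 1 1 ^+ m * gam 0 0 ^+ n.
have chiE : ((chi_val p m (n%:Z - m%:Z) gam)%:R : 'F_p) = N%:~R.
  rewrite natr_Zp det_mx2 intrB !intrM cF mulr0 subr0 exprMn -mulrA.
  rewrite mulrCA (exprnP ((gam 0 0)%:~R : 'F_p)) -expfzDr // addrC subrK -exprnP.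
  by rewrite !rmorphXn.
have hN : (((chi_val p m (n%:Z - m%:Z) gam)%:Z - N)%:~R : 'F_p) = 0.
  by rewrite intrB -chiE subrr.
by have := pdivs_intr R (Fp_intr_eq0 pp hN); rewrite intrB /N intrM !rmorphXn.
Qed.

Section GradedPiece.
Variables (O : idomainType) (p g r s : nat).
Hypotheses (p_neq0 : p%:R != 0 :> O) (le_sr : (s <= r)%N) (le_rg : (r <= g)%N).
Implicit Types (P Q : {mpoly O[2]}).
Local Notation M := ((p%:R : O) ^+ s *: monXY O (r - s) (g - r + s)).

(* The coefficient of [X^(r-s) Y^(g-r+s)] divided by [p^s]; outside Fil^{r,s}
   no quotient need exist and the value is an arbitrary junk element. *)
Definition fil_coef P : O :=
  epsilon (inhabits 0) (fun z => coefXY g (r - s) P = (p%:R : O) ^+ s * z).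

Lemma fil_coef_eq P z : coefXY g (r - s) P = (p%:R : O) ^+ s * z -> fil_coef P = z.
Proof.
move=> E; have := epsilon_spec (inhabits 0)
  (fun z => coefXY g (r - s) P = (p%:R : O) ^+ s * z) (ex_intro _ z E).
by rewrite -/(fil_coef P) E => /mulfI -> //; apply: expf_neq0.
Qed.

Lemma fil_coefP P : Filrs p g r s P -> coefXY g (r - s) P = (p%:R : O) ^+ s * fil_coef P.
Proof.
move=> [[_ hP] _].
apply: (epsilon_spec (inhabits 0) (fun z => coefXY g (r - s) P = (p%:R : O) ^+ s * z)).
have [->|s_gt0] := posnP s; first by exists (coefXY g (r - 0) P); rewrite mul1r.
by have := hP (r - s)%N; rewrite subKn //; apply; rewrite ltn_subrL s_gt0 (leq_trans s_gt0).
Qed.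

Lemma Filrs_gen : Filrs p g r s M.
Proof.
apply/FilrsE; split.
  apply/dhomogZ; rewrite dhomogX; apply/eqP; apply: (etrans (mdeg2 _)).
  by rewrite mXY0 mXY1; lia.
move=> m; rewrite mcoeffZ mcoeffX; case: eqP => [<-|_]; last by rewrite mulr0; apply: pdivs0.
have -> : filw r s (mXY (r - s) (g - r + s) ord0) = s.
  by rewrite mXY0 /filw leq_subr; case: leqP; lia.
by rewrite mulr1; apply: pdivs_expr.
Qed.

Lemma fil_coef_linear x P Q : Filrs p g r s P -> Filrs p g r s Q ->
  fil_coef (x *: P + Q) = x * fil_coef P + fil_coef Q.
Proof.
move=> /fil_coefP hP /fil_coefP hQ; apply: fil_coef_eq.
by move: hP hQ; rewrite /coefXY mcoeffD mcoeffZ => -> ->; ring.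
Qed.

Lemma fil_coef_gen x : fil_coef (x *: M) = x.
Proof.
apply: fil_coef_eq; rewrite /coefXY; have -> : (g - (r - s) = g - r + s)%N by lia.
by rewrite !mcoeffZ mcoeffX eqxx mulr1 mulrC.
Qed.

Lemma Filrs_sub_fil_coef P : Filrs p g r s P -> Filrs p g r s.+1 (P - fil_coef P *: M).
Proof.
move=> hP; have hM : Filrs p g r s (fil_coef P *: M) by apply/FilrsZ/Filrs_gen.
apply: Filrs_coef_pdivsS (FilrsB hP hM) _ => //.
rewrite /coefXY mcoeffB -!/(coefXY g (r - s) _) (fil_coefP hP) (fil_coefP hM).
by rewrite fil_coef_gen subrr; apply: pdivs0.
Qed.

Lemma fil_coef_eq0_mod P :
  Filrs p g r s P -> congp p (fil_coef P) 0 <-> Filrs p g r s.+1 P.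
Proof.
move=> hP; rewrite /congp subr0; split=> [hc|[_ h]].
  apply: Filrs_coef_pdivsS => //.
  by rewrite (fil_coefP hP) -addn1; apply: pdivsM hc; apply: pdivs_expr.
have := h (r - s)%N; rewrite subSS leqnn leq_subr subKn // (fil_coefP hP).
case=> // k hk; exists k; apply: (mulfI (expf_neq0 s p_neq0)).
by rewrite hk exprSr expr1 mulrA.
Qed.

Lemma congp_fil_coef P Q : Filrs p g r s P -> Filrs p g r s Q ->
  Filrs p g r s.+1 (P - Q) -> congp p (fil_coef P) (fil_coef Q).
Proof.
move=> hP hQ /(fil_coef_eq0_mod (FilrsB hP hQ)).
rewrite -[P - Q]addrC -scaleN1r fil_coef_linear // /congp subr0 mulN1r.
by rewrite addrC.
Qed.

Lemma fil_coef_act (gam : 'M[int]_2) P :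
  prime p -> S0 p gam -> Filrs p g r s P ->
  congp p (fil_coef (act gam P))
    ((chi_val p (r - s) (g%:Z - 2 * r%:Z + 2 * s%:Z) gam)%:R * fil_coef P).
Proof.
move=> pp hS hP; have [_ hc _] := hS.
have hZ : Filrs p g r s (fil_coef P *: M) by apply/FilrsZ/Filrs_gen.
have hPZ := Filrs_sub_fil_coef hP.
have hact : congp p (fil_coef (act gam P)) (fil_coef (act gam (fil_coef P *: M))).
  by apply: congp_fil_coef; rewrite -?actB; apply: (Filrs_act hc).
have act_gen : fil_coef (act gam (fil_coef P *: M)) =
    fil_coef P * (act gam (monXY O (r - s) (g - r + s)))@_(mXY (r - s) (g - r + s)).
  apply: fil_coef_eq; rewrite !actZ /coefXY.
  have -> : (g - (r - s) = g - r + s)%N by lia.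
  by rewrite !mcoeffZ mulrCA.
rewrite act_gen in hact; apply: congp_trans hact _.
rewrite [_ * fil_coef P]mulrC; apply: congpMl.
apply: congp_trans (act_monXY_coef O hc _ _) _.
have -> : g%:Z - 2 * r%:Z + 2 * s%:Z = (g - r + s)%N%:Z - (r - s)%N%:Z by lia.
exact/congp_sym/chi_val_congp.
Qed.

End GradedPiece.

Theorem lemma6p6 (p : nat) (O : idomainType) (g r s : nat) :
  prime p -> odd p -> is_ring_of_integers_padic p O ->
  (s <= r)%N -> (r <= g)%N ->
  (forall (gam : 'M[int]_2) (P : {mpoly O[2]}),
      S0 p gam -> Filrs p g r s P -> Filrs p g r s (act gam P))
  /\
  (exists phi : {mpoly O[2]} -> O,
     [/\ (forall (x : O) (P Q : {mpoly O[2]}), Filrs p g r s P -> Filrs p g r s Q ->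
            congp p (phi (x *: P + Q)) (x * phi P + phi Q)),
         (forall P : {mpoly O[2]}, Filrs p g r s P ->
            (congp p (phi P) 0 <-> Filrs p g r s.+1 P)),
         (forall y : O, exists P : {mpoly O[2]}, Filrs p g r s P /\ congp p (phi P) y)
       & (forall (gam : 'M[int]_2) (P : {mpoly O[2]}), S0 p gam -> Filrs p g r s P ->
            congp p (phi (act gam P))
              ((chi_val p (r - s) (g%:Z - 2 * r%:Z + 2 * s%:Z) gam)%:R * phi P))])
  /\
  (Filrs p g r s ((p%:R : O) ^+ s *: monXY O (r - s) (g - r + s)) /\
   forall P : {mpoly O[2]}, Filrs p g r s P ->
     exists x : O, Filrs p g r s.+1 (P - x *: ((p%:R : O) ^+ s *: monXY O (r - s) (g - r + s)))).
Proof.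
(* Of the hypotheses on [p] and [O] only [p%:R != 0] in [O] is used; [odd p] is not. *)
move=> pp _ [_ [_ _ [char0 _] _ _]] le_sr le_rg.
have p_neq0 : p%:R != 0 :> O := char0 p (prime_gt0 pp).
split; first by move=> gam P [_ hc _]; apply: Filrs_act.
split.
  exists (fil_coef p g r s); split=> [x P Q hP hQ|P|y|gam P hS hP].
  - by rewrite fil_coef_linear //; apply: congpxx.
  - exact: fil_coef_eq0_mod.
  - exists (y *: ((p%:R : O) ^+ s *: monXY O (r - s) (g - r + s))).
    by rewrite fil_coef_gen //; split; [apply/FilrsZ/Filrs_gen | apply: congpxx].
  - exact: fil_coef_act.
split; first exact: Filrs_gen.
by move=> P hP; exists (fil_coef p g r s P); apply: Filrs_sub_fil_coef.
Qed.
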